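(* Let $\sigma>0$ be fixed and $z\in\mathbb{C}$. (i) If $|\Re z|\ge\sigma$, then $|e^z-1|\ge1-e^{-\sigma}$. (ii) Let $R=|z|$ and $\mathcal{J}=\bigcup_{m\in\mathbb{Z}}(2\pi m-\pi/2,\,2\pi m+\pi/2)$. Then for $z$ with $|\Re z|<\sigma$, $$|e^z-1|\ge|\sin R|\,\mathbf{1}_{\{R\in\mathcal{J}\}}+\mathbf{1}_{\{R\in\mathcal{J}^c\}}+O(1/R)\qquad\text{as }R\to\infty,$$ i.e. there are constants $C,R_0>0$ such that for all $z$ with $|\Re z|<\sigma$ and $R=|z|\ge R_0$, $|e^z-1|\ge|\sin R|\,\mathbf{1}_{\{R\in\mathcal{J}\}}+\mathbf{1}_{\{R\in\mathcal{J}^c\}}-C/R$.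
   Context: $\mathbf{1}_S$ denotes the indicator function of a set $S$. *)

From Stdlib Require Import Reals ZArith ClassicalEpsilon.
From Coquelicot Require Import Coquelicot.
Open Scope R_scope.

Definition Cexp (z : C) : C :=
  (exp (Re z) * cos (Im z), exp (Re z) * sin (Im z)).

Definition indic (P : Prop) : R :=
  if excluded_middle_informative P then 1 else 0.

Definition inJ (r : R) : Prop :=
  exists m : Z, 2 * PI * IZR m - PI / 2 < r < 2 * PI * IZR m + PI / 2.

(* Write z = x + iy and R = |z|.  Expanding, |e^z - 1|^2 = (e^x cos y - 1)^2 + (e^x sin y)^2,
   which dominates (e^x - 1)^2, sin^2 y and (1 - e^x cos y)^2.  The first gives (i).  For (ii),
   |x| < sigma forces R - |y| <= x^2 / R < sigma^2 / R, and sin, cos are 1-Lipschitz, so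
   |sin y| and cos y are within O(1/R) of |sin R| and cos R.  On J this yields the |sin R| term;
   off J we have cos R <= 0, hence e^x cos y = O(1/R) and 1 - e^x cos y >= 1 - O(1/R). *)
From Stdlib Require Import Reals ZArith Lra Lia ClassicalEpsilon.
From Coquelicot Require Import Coquelicot.
Open Scope R_scope.

Lemma indic_true (P : Prop) : P -> indic P = 1.
Proof. intros HP. unfold indic. destruct (excluded_middle_informative P); tauto. Qed.

Lemma indic_false (P : Prop) : ~ P -> indic P = 0.
Proof. intros HP. unfold indic. destruct (excluded_middle_informative P); tauto. Qed.

Lemma exp_le_exp x y : x <= y -> exp x <= exp y.
Proof. intros [h | ->]; [apply Rlt_le, exp_increasing | apply Rle_refl]; assumption. Qed.

Lemma le_Cmod_of_sqr_le (b : R) (w : C) : (0 < b -> b ^ 2 <= Cmod w ^ 2) -> b <= Cmod w.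
Proof.
  intros H. pose proof (Cmod_ge_0 w).
  destruct (Rle_or_lt b 0) as [hb | hb]; [lra | specialize (H hb); nra].
Qed.

Lemma Rabs_sin_le u : Rabs (sin u) <= Rabs u.
Proof.
  assert (Hpos : forall v, 0 < v -> Rabs (sin v) <= v).
  { intros v hv. pose proof (sin_lt_x v hv). pose proof PI2_1. pose proof (SIN_bound v).
    destruct (Rle_or_lt 1 v).
    - apply Rabs_le; lra.
    - assert (0 <= sin v) by (apply sin_ge_0; lra). apply Rabs_le; lra. }
  destruct (Rtotal_order u 0) as [h | [-> | h]].
  - rewrite (Rabs_left u), <- Rabs_Ropp, <- sin_neg by lra. apply Hpos; lra.
  - rewrite sin_0, Rabs_R0. lra.
  - rewrite (Rabs_right u) by lra. apply Hpos; lra.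
Qed.

Lemma Rabs_half u : Rabs (u / 2) = Rabs u / 2.
Proof. unfold Rdiv. rewrite Rabs_mult, (Rabs_right (/ 2)) by lra. reflexivity. Qed.

Lemma Rabs_sin_sub_le a b : Rabs (sin a - sin b) <= Rabs (a - b).
Proof.
  rewrite form4, !Rabs_mult, (Rabs_right 2) by lra.
  pose proof (Rabs_sin_le ((a - b) / 2)) as Hs. rewrite Rabs_half in Hs.
  pose proof (Rabs_pos (sin ((a - b) / 2))).
  pose proof (Rabs_pos (cos ((a + b) / 2))).
  assert (Rabs (cos ((a + b) / 2)) <= 1) by (apply Rabs_le, COS_bound).
  nra.
Qed.

Lemma Rabs_cos_sub_le a b : Rabs (cos a - cos b) <= Rabs (a - b).
Proof.
  rewrite form2, !Rabs_mult, (Rabs_left (-2)) by lra.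
  pose proof (Rabs_sin_le ((a - b) / 2)) as Hs. rewrite Rabs_half in Hs.
  pose proof (Rabs_pos (sin ((a - b) / 2))).
  pose proof (Rabs_pos (sin ((a + b) / 2))).
  assert (Rabs (sin ((a + b) / 2)) <= 1) by (apply Rabs_le, SIN_bound).
  nra.
Qed.

Lemma cos_add_2PI_IZR t (m : Z) : cos (t + 2 * PI * IZR m) = cos t.
Proof.
  destruct (Z_le_gt_dec 0 m) as [h | h].
  - rewrite <- (Z2Nat.id m h), <- INR_IZR_INZ, <- (cos_period t (Z.to_nat m)).
    f_equal. ring.
  - assert (h' : (0 <= - m)%Z) by lia.
    rewrite <- (cos_period (t + 2 * PI * IZR m) (Z.to_nat (- m))), INR_IZR_INZ,
      Z2Nat.id, opp_IZR by exact h'.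
    f_equal. ring.
Qed.

Lemma cos_nonpos_of_not_inJ r : ~ inJ r -> cos r <= 0.
Proof.
  intros nJ. pose proof PI_RGT_0.
  set (s := (r + PI / 2) / (2 * PI)).
  assert (Hs : s * (2 * PI) = r + PI / 2) by (unfold s; field; lra).
  destruct (archimed s) as [h1 h2].
  (* m is the integer with 2 pi m <= r + pi/2 < 2 pi (m + 1). *)
  set (m := (up s - 1)%Z).
  assert (Hm : IZR m = IZR (up s) - 1) by (unfold m; rewrite minus_IZR; reflexivity).
  set (t := r - 2 * PI * IZR m).
  assert (Ht : - (PI / 2) <= t < 3 * (PI / 2)) by (unfold t; nra).
  replace r with (t + 2 * PI * IZR m) by (unfold t; ring).
  rewrite cos_add_2PI_IZR.
  destruct (Rle_or_lt (PI / 2) t) as [h | h].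
  - apply cos_le_0; lra.
  - assert (E : t = - (PI / 2)).
    { destruct (Rle_lt_or_eq_dec _ _ (proj1 Ht)) as [h' | h']; [|lra].
      exfalso. apply nJ. exists m. unfold t in h, h'. lra. }
    rewrite E, cos_neg, cos_PI2. lra.
Qed.

Lemma Cmod_Cexp_minus_1_sqr (z : C) :
  Cmod (Cminus (Cexp z) (RtoC 1)) ^ 2
  = (exp (Re z) * cos (Im z) - 1) ^ 2 + (exp (Re z) * sin (Im z)) ^ 2.
Proof. rewrite Cmod2_alt. unfold Cexp, Cminus, RtoC. simpl. ring. Qed.

Lemma Cmod_Cexp_minus_1_ge_Rabs_exp (z : C) :
  Rabs (exp (Re z) - 1) <= Cmod (Cminus (Cexp z) (RtoC 1)).
Proof.
  apply le_Cmod_of_sqr_le. intros _.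
  rewrite Cmod_Cexp_minus_1_sqr, pow2_abs.
  pose proof (exp_pos (Re z)). pose proof (COS_bound (Im z)). pose proof (sin2_cos2 (Im z)).
  unfold Rsqr in *. nra.
Qed.

Lemma Cmod_Cexp_minus_1_ge_Rabs_sin (z : C) :
  Rabs (sin (Im z)) <= Cmod (Cminus (Cexp z) (RtoC 1)).
Proof.
  apply le_Cmod_of_sqr_le. intros _.
  rewrite Cmod_Cexp_minus_1_sqr, pow2_abs.
  pose proof (sin2_cos2 (Im z)). pose proof (pow2_ge_0 (exp (Re z) - cos (Im z))).
  unfold Rsqr in *. nra.
Qed.

Lemma Cmod_Cexp_minus_1_ge_1_minus_cos (z : C) :
  1 - exp (Re z) * cos (Im z) <= Cmod (Cminus (Cexp z) (RtoC 1)).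
Proof.
  apply le_Cmod_of_sqr_le. intros _.
  rewrite Cmod_Cexp_minus_1_sqr. pose proof (pow2_ge_0 (exp (Re z) * sin (Im z))). nra.
Qed.

Lemma exp_minus_1_ge_of_Rabs_ge (sigma x : R) :
  sigma <= Rabs x -> 1 - exp (- sigma) <= Rabs (exp x - 1).
Proof.
  intros Hx. pose proof (exp_pos x).
  destruct (Rcase_abs x) as [hx | hx].
  - rewrite Rabs_left in Hx by lra.
    assert (exp x <= exp (- sigma)) by (apply exp_le_exp; lra).
    pose proof (Rle_abs (1 - exp x)). rewrite Rabs_minus_sym. lra.
  - rewrite Rabs_right in Hx by lra.
    assert (exp sigma <= exp x) by (apply exp_le_exp; lra).
    assert (E : exp (- sigma) * exp sigma = 1)
      by (rewrite <- exp_plus, Rplus_opp_l; apply exp_0).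
    assert (exp sigma + exp (- sigma) - 2 = exp (- sigma) * (exp sigma - 1) ^ 2).
    { replace (exp (- sigma) * (exp sigma - 1) ^ 2) with
        (exp sigma * (exp (- sigma) * exp sigma) - 2 * (exp (- sigma) * exp sigma)
         + exp (- sigma)) by ring.
      rewrite E. ring. }
    assert (0 <= exp (- sigma) * (exp sigma - 1) ^ 2)
      by (apply Rmult_le_pos; [apply Rlt_le, exp_pos | apply pow2_ge_0]).
    pose proof (Rle_abs (exp x - 1)). lra.
Qed.

Lemma Rabs_Im_le_Cmod (z : C) : Rabs (Im z) <= Cmod z.
Proof.
  apply le_Cmod_of_sqr_le. intros _.
  rewrite Cmod2_alt, pow2_abs. pose proof (pow2_ge_0 (Re z)). lra.
Qed.

(* From Cmod z^2 - Im z^2 = Re z^2 and Cmod z + |Im z| >= Cmod z. *)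
Lemma Cmod_sub_Rabs_Im_mul_le (z : C) : (Cmod z - Rabs (Im z)) * Cmod z <= Re z ^ 2.
Proof.
  pose proof (Cmod2_alt z). pose proof (pow2_abs (Im z)).
  pose proof (Rabs_Im_le_Cmod z). pose proof (Rabs_pos (Im z)). nra.
Qed.

Lemma Cmod_Cexp_minus_1_ge_sin_Cmod (z : C) :
  Rabs (sin (Cmod z)) - (Cmod z - Rabs (Im z)) <= Cmod (Cminus (Cexp z) (RtoC 1)).
Proof.
  assert (Hsin : Rabs (sin (Rabs (Im z))) = Rabs (sin (Im z))).
  { destruct (Rcase_abs (Im z)).
    - rewrite (Rabs_left (Im z)), sin_neg, Rabs_Ropp by lra. reflexivity.
    - rewrite (Rabs_right (Im z)) by lra. reflexivity. }
  pose proof (Rabs_sin_sub_le (Cmod z) (Rabs (Im z))).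
  pose proof (Rabs_triang_inv (sin (Cmod z)) (sin (Rabs (Im z)))).
  pose proof (Rabs_Im_le_Cmod z).
  pose proof (Cmod_Cexp_minus_1_ge_Rabs_sin z).
  rewrite (Rabs_right (Cmod z - Rabs (Im z))) in * by lra. lra.
Qed.

Lemma Cmod_Cexp_minus_1_ge_of_cos_Cmod_nonpos (z : C) : cos (Cmod z) <= 0 ->
  1 - exp (Re z) * (Cmod z - Rabs (Im z)) <= Cmod (Cminus (Cexp z) (RtoC 1)).
Proof.
  intros Hc.
  assert (Hcos : cos (Rabs (Im z)) = cos (Im z)).
  { destruct (Rcase_abs (Im z)).
    - rewrite Rabs_left, cos_neg by lra. reflexivity.
    - rewrite Rabs_right by lra. reflexivity. }
  pose proof (Rabs_cos_sub_le (Rabs (Im z)) (Cmod z)).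
  pose proof (Rle_abs (cos (Rabs (Im z)) - cos (Cmod z))).
  pose proof (Rabs_Im_le_Cmod z).
  pose proof (Cmod_Cexp_minus_1_ge_1_minus_cos z).
  pose proof (exp_pos (Re z)).
  rewrite (Rabs_left1 (Rabs (Im z) - Cmod z)), Hcos in * by lra.
  assert (cos (Im z) <= Cmod z - Rabs (Im z)) by lra.
  nra.
Qed.

Theorem lemmaA1 (sigma : R) (hsigma : 0 < sigma) :
  (forall z : C, sigma <= Rabs (Re z) ->
     1 - exp (- sigma) <= Cmod (Cminus (Cexp z) (RtoC 1)))
  /\
  (exists Cst R0 : R, 0 < Cst /\ 0 < R0 /\
     forall z : C, Rabs (Re z) < sigma -> R0 <= Cmod z ->
       Rabs (sin (Cmod z)) * indic (inJ (Cmod z)) + indic (~ inJ (Cmod z))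
         - Cst / Cmod z
       <= Cmod (Cminus (Cexp z) (RtoC 1))).
Proof.
  split.
  - intros z Hz. eapply Rle_trans.
    + apply exp_minus_1_ge_of_Rabs_ge, Hz.
    + apply Cmod_Cexp_minus_1_ge_Rabs_exp.
  - assert (He : 1 <= exp sigma) by (rewrite <- exp_0; apply exp_le_exp; lra).
    exists (exp sigma * sigma ^ 2), 1.
    split; [pose proof (pow_lt sigma 2 hsigma); nra | split; [lra |]].
    intros z Hx HR.
    set (d := Cmod z - Rabs (Im z)).
    assert (Hd0 : 0 <= d) by (pose proof (Rabs_Im_le_Cmod z); unfold d; lra).
    assert (Hd : d <= sigma ^ 2 / Cmod z).
    { apply Rmult_le_reg_r with (Cmod z); [lra |].
      replace (sigma ^ 2 / Cmod z * Cmod z) with (sigma ^ 2) by (field; lra).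
      pose proof (Cmod_sub_Rabs_Im_mul_le z) as HdR. fold d in HdR.
      pose proof (pow2_abs (Re z)). pose proof (Rabs_pos (Re z)). nra. }
    replace (exp sigma * sigma ^ 2 / Cmod z) with (exp sigma * (sigma ^ 2 / Cmod z))
      by (field; lra).
    destruct (classic (inJ (Cmod z))) as [hJ | hJ].
    + rewrite indic_true, indic_false by tauto.
      pose proof (Cmod_Cexp_minus_1_ge_sin_Cmod z) as Hsin. fold d in Hsin. nra.
    + rewrite indic_false, indic_true by tauto.
      pose proof (Cmod_Cexp_minus_1_ge_of_cos_Cmod_nonpos z (cos_nonpos_of_not_inJ _ hJ))
        as Hcos.
      fold d in Hcos.
      assert (exp (Re z) <= exp sigma) by (apply exp_le_exp; pose proof (Rle_abs (Re z)); lra).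
      nra.
Qed.
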